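(* Let $V$ be a finite-dimensional vector space over a field and let $\rho,\lambda$ be endomorphisms of $V$. Suppose there is $n\in\mathbb Z_{\ge1}$ with $\rho^{n+1}=\rho^n$, $\ker(\rho^n)\cap\ker(\lambda)=0$ and $\rho^n\circ\lambda=\lambda\circ\rho^n$. Then $\mathrm{im}(\rho)+\mathrm{im}(\lambda)=V$. *)

From HB Require Import structures.
From mathcomp Require Import all_boot all_algebra.
Set Implicit Arguments. Unset Strict Implicit. Unset Printing Implicit Defensive.
Import GRing.Theory.
Local Open Scope ring_scope.

Definition lfun_pow (F : fieldType) (V : vectType F) (f : 'End(V)) (n : nat) : 'End(V) :=
  iter n (fun g => (f \o g)%VF) \1%VF.

From HB Require Import structures.
From mathcomp Require Import all_boot all_algebra.
Import GRing.Theory.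
Local Open Scope ring_scope.

(* Put P := rho^n. Stabilization makes P idempotent, so V = im P + ker P, and
   im P <= im rho since n >= 1. As P commutes with lambda, lambda maps ker P
   into itself; being injective there, it maps ker P onto ker P by a dimension
   count, so ker P <= im lambda. *)

Section LfunPow.

Context {F : fieldType} {V : vectType F} (f : 'End(V)).

Lemma lfun_powD m k : lfun_pow f (m + k) = (lfun_pow f m \o lfun_pow f k)%VF.
Proof.
elim: m => [|m IH]; first by rewrite add0n /lfun_pow /= comp_lfun1l.
by rewrite addSn /lfun_pow iterS -/(lfun_pow f (m + k)) IH comp_lfunA.
Qed.

Lemma limg_lfun_powS n : (limg (lfun_pow f n.+1) <= limg f)%VS.
Proof. by rewrite /lfun_pow iterS limg_comp limgS ?subvf. Qed.

Variable n : nat.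
Hypothesis (pow_stable : lfun_pow f n.+1 = lfun_pow f n).

Lemma lfun_pow_stable k : lfun_pow f (k + n) = lfun_pow f n.
Proof.
elim: k => [|k IH] //.
by rewrite addSn /lfun_pow iterS -/(lfun_pow f (k + n)) IH.
Qed.

Lemma lfun_pow_stable_idem : (lfun_pow f n \o lfun_pow f n)%VF = lfun_pow f n.
Proof. by rewrite -lfun_powD lfun_pow_stable. Qed.

End LfunPow.

Section Endomorphisms.

Context {F : fieldType} {V : vectType F}.
Implicit Types (f g p : 'End(V)) (U : {vspace V}).

Lemma limg_add_lker_idem p : (p \o p)%VF = p -> (limg p + lker p)%VS = fullv.
Proof.
move=> idem_p; apply/eqP; rewrite eqEsubv subvf /=; apply/subvP => v _.
rewrite -[v](subrK (p v)) addrC memv_add ?memv_img ?memvf //.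
by rewrite memv_ker linearB /= -comp_lfunE idem_p subrr.
Qed.

Lemma lker_comm_stable f g :
  (f \o g = g \o f)%VF -> (g @: lker f <= lker f)%VS.
Proof.
move=> fgC; apply/subvP => _ /memv_imgP [u + ->].
by rewrite !memv_ker -comp_lfunE fgC comp_lfunE => /eqP ->; rewrite linear0.
Qed.

Lemma limg_injective_stable g U :
  (g @: U <= U)%VS -> (U :&: lker g = 0)%VS -> (g @: U)%VS = U.
Proof.
by move=> gUU g_injU; apply/eqP; rewrite eqEdim gUU (limg_dim_eq g_injU) leqnn.
Qed.

End Endomorphisms.

Theorem mainTheorem5 (F : fieldType) (V : vectType F) (rho lambda : 'End(V)) (n : nat) :
  (1 <= n)%N ->
  lfun_pow rho n.+1 = lfun_pow rho n ->
  (lker (lfun_pow rho n) :&: lker lambda = 0)%VS ->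
  (lfun_pow rho n \o lambda = lambda \o lfun_pow rho n)%VF ->
  (limg rho + limg lambda)%VS = fullv.
Proof.
case: n => // n _; set P := lfun_pow rho n.+1 => stable lambda_injK PlambdaC.
have lambdaK : (lambda @: lker P)%VS = lker P.
  by apply: limg_injective_stable lambda_injK; exact: lker_comm_stable.
have PK := limg_add_lker_idem P (lfun_pow_stable_idem rho _ stable).
apply/eqP; rewrite eqEsubv subvf /= -[X in (X <= _)%VS]PK -lambdaK.
by apply: addvS; [exact: limg_lfun_powS | exact: limgS (subvf _)].
Qed.
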